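(* Let $a,b,d$ be positive integers with $d$ not a perfect square, $\alpha=a+b^2\sqrt d$, $N_\alpha=a^2-b^4d$, and $t,u$ positive integers with $\varepsilon=(t+u\sqrt d)/2$ a unit of the ring of integers of $\mathbb{Q}(\sqrt d)$; define $x_k+y_k\sqrt d=\alpha\varepsilon^{2k}$ for $k\in\mathbb{Z}$. Suppose $k\ne0$, $\gcd(a,b)=1$, $N_\alpha<0$, and $x_k,y_k$ are both integers. Let $t'=\operatorname{core}(N_\alpha)$, $u_1=2x_k$, $u_2=\pm2\sqrt{N_\alpha/\operatorname{core}(N_\alpha)}$, and let $g$ be defined from $(t',u_1,u_2)$ as below. Then $g^2/\gcd(a^2,db^4)=2^m$ for some integer $m\ge0$.
   Context: $\operatorname{core}(n)$ is the unique squarefree integer with $n/\operatorname{core}(n)$ a perfect square. Given $t',u_1,u_2$: $g_1=\gcd(u_1,u_2)$, $g_2=\gcd(u_1/g_1,t')$ (positive gcds); $g_3=1$ if $t'\equiv1\pmod4$ and $(u_1-u_2)/g_1$ is even, $g_3=2$ if $t'\equiv3\pmod4$ and $(u_1-u_2)/g_1$ is even, $g_3=4$ otherwise; $g=g_1\sqrt{g_2/g_3}$. *)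

From mathcomp Require Import all_boot all_order all_algebra all_field.
Set Implicit Arguments. Unset Strict Implicit. Unset Printing Implicit Defensive.
Import Order.TTheory GRing.Theory Num.Theory.
Local Open Scope ring_scope.

Definition sqfree_int (c : int) : Prop :=
  c != 0 /\ forall p : nat, prime p -> ~~ (p ^ 2 %| `|c|%N)%N.

Definition is_core (n c : int) : Prop :=
  sqfree_int c /\ exists s : int, n = c * s ^+ 2.

Definition g1_of (u1 u2 : int) : int := gcdz u1 u2.
Definition g2_of (t' u1 u2 : int) : int := gcdz (u1 %/ g1_of u1 u2)%Z t'.
Definition g3_of (t' u1 u2 : int) : int :=
  if (2 %| ((u1 - u2) %/ g1_of u1 u2)%Z)%Z then
    (if (t' %% 4)%Z == 1 then 1 else if (t' %% 4)%Z == 3 then 2 else 4)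
  else 4.
Definition g_of (t' u1 u2 : int) : algC :=
  (g1_of u1 u2)%:~R * sqrtC ((g2_of t' u1 u2)%:~R / (g3_of t' u1 u2)%:~R).

From mathcomp Require Import all_boot all_order all_algebra all_field.
From mathcomp Require Import ring zify.
Import Order.TTheory GRing.Theory Num.Theory.
Local Open Scope ring_scope.

(* Since eps and eps^-1 are algebraic integers, t^2 - d u^2 = +-4, so eps^(2k) is
   (P + Q sqrt d)/2 with P^2 - d Q^2 = 4, and 2X = aP + b^2 dQ, 2Y = aQ + b^2 P.
   These relations show that G = gcd(a^2, d) = gcd(a^2, d b^4) divides both X^2 and
   N = a^2 - b^4 d = X^2 - dY^2; inverting them, and using gcd(a, b) = 1, shows that
   D = gcd(X^2, N) divides 16 G.  Hence D = 2^i G.  Since t' is squarefree,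
   D = h^2 gcd(X/h, t') with h = gcd(X, s), that is D = g1^2 g2 / 4, so that
   g^2 / G = 4 D / (g3 G) = 2^(i+2) / g3 is a power of 2. *)

Lemma sqfree_dvdn_sqr (n x : nat) : (0 < n)%N ->
  (forall p : nat, prime p -> ~~ (p ^ 2 %| n)%N) -> (n %| x ^ 2)%N -> (n %| x)%N.
Proof.
move=> n_gt0 sqf n_x2; apply/dvdn_partP => // p; rewrite mem_primes => /and3P[p_pr _ p_n].
have /andP[p_x _] : (p %| x)%N && (0 < 2)%N by rewrite -Euclid_dvdX // (dvdn_trans p_n).
rewrite p_part (dvdn_trans _ p_x) // -[p in (_ %| p)%N]expn1 dvdn_exp2l //.
by rewrite leqNgt -pfactor_dvdn // sqf.
Qed.

Lemma gcdn_sqr_sqfree (x n : nat) : (0 < n)%N ->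
  (forall p : nat, prime p -> ~~ (p ^ 2 %| n)%N) -> gcdn (x ^ 2) n = gcdn x n.
Proof.
move=> n_gt0 sqf; apply/eqP; rewrite eqn_dvd dvdn_gcd dvdn_gcdr andbT.
rewrite dvdn_gcd dvdn_gcdr (dvdn_trans (dvdn_gcdl _ _) (dvdn_exp _ _)) //= andbT.
apply: sqfree_dvdn_sqr (dvdn_gcdl _ _); first by rewrite gcdn_gt0 n_gt0 orbT.
by move=> p /sqf; apply: contra => /dvdn_trans; apply; apply: dvdn_gcdr.
Qed.

Lemma gcdz_sqr_mul_sqr (X s t : int) : sqfree_int t ->
  gcdz (X ^+ 2) (t * s ^+ 2) = gcdz X s ^+ 2 * gcdz (X %/ gcdz X s)%Z t.
Proof.
move=> [t_neq0 sqf]; have [/eqP|h_neq0] := eqVneq (gcdz X s) 0.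
  by rewrite gcdz_eq0 => /andP[/eqP-> /eqP->]; rewrite expr0n mulr0 mul0r gcd0z.
set h := gcdz X s in h_neq0 *.
have [X' DX] : exists X', X = X' * h by exists (X %/ h)%Z; rewrite divzK ?dvdz_gcdl.
have [s' Ds] : exists s', s = s' * h by exists (s %/ h)%Z; rewrite divzK ?dvdz_gcdr.
have habs : `|h|%:Z = h by rewrite gez0_abs.
have cop : coprimez X' s'.
  by rewrite /coprimez; apply/eqP/(mulIf h_neq0); rewrite mul1r -{1}habs mulz_gcdl -DX -Ds.
have -> : X ^+ 2 = X' ^+ 2 * h ^+ 2 by rewrite DX; ring.
have -> : t * s ^+ 2 = t * s' ^+ 2 * h ^+ 2 by rewrite Ds; ring.
have habs2 : `|h ^+ 2|%:Z = h ^+ 2 by rewrite gez0_abs // exprn_ge0.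
rewrite -{1 2}habs2 -mulz_gcdl habs2 mulrC Gauss_gcdzl ?coprimezXl ?coprimezXr //.
by rewrite DX mulzK // /gcdz abszX gcdn_sqr_sqfree // absz_gt0.
Qed.

Lemma dvdz_sqr_gcd_coprime (a b c e D : int) : coprimez a b ->
  (D %| c * a)%Z -> (D %| c * b * e)%Z -> (D %| c ^+ 2 * gcdz a e)%Z.
Proof.
move=> cop_ab D_ca D_cbe.
have Db_c : (gcdz D b %| c)%Z.
  have : (gcdz D b %| gcdz b (c * a))%Z by rewrite dvdz_gcd dvdz_gcdr (dvdz_trans (dvdz_gcdl _ _)).
  rewrite Gauss_gcdzl 1?coprimez_sym // => /dvdz_trans; apply; apply: dvdz_gcdr.
have D_cce : (D %| c * e * c)%Z.
  have : (D %| gcdz (c * e * b) (c * e * D))%Z.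
    by rewrite dvdz_gcd mulrAC D_cbe dvdz_mull.
  rewrite -mulz_gcdr => /dvdz_trans; apply; rewrite gcdzC.
  by apply: dvdz_mul Db_c; rewrite dvdzE absz_id.
rewrite -(gez0_abs (sqr_ge0 c)) mulz_gcdr dvdz_gcd (_ : c ^+ 2 * e = c * e * c) ?D_cce.
  by rewrite expr2 -mulrA dvdz_mull.
by ring.
Qed.

Lemma dvdz_sandwich_pow2 (G D : int) (n : nat) : 0 < G -> 0 <= D ->
  (G %| D)%Z -> (D %| 2 ^+ n * G)%Z -> exists2 i, (i <= n)%N & D = G * 2 ^+ i.
Proof.
move=> G_gt0 D_ge0 /dvdzP[c Dc]; move: D_ge0; rewrite {}Dc pmulr_lge0 //.
rewrite dvdz_mul2r ?gt_eqF // => c_ge0 c_2n.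
have [i le_in Dc] : exists2 i, (i <= n)%N & `|c|%N = (2 ^ i)%N.
  by apply/dvdn_pfactor => //; move: c_2n; rewrite dvdzE abszX.
by exists i; rewrite // mulrC -(gez0_abs c_ge0) Dc -natz natrX.
Qed.

Lemma dvdz2_sqrB (x : int) : (2 %| x ^+ 2 - x)%Z.
Proof.
have r_ge0 : 0 <= (x %% 2)%Z by apply: modz_ge0.
have r_lt2 : (x %% 2)%Z < 2 by apply: ltz_pmod.
have Dx := divz_eq x 2; set q := (x %/ 2)%Z in Dx; set r := (x %% 2)%Z in Dx r_ge0 r_lt2.
apply/dvdzP; have [r0|r1] : r = 0 \/ r = 1 by lia.
  by exists (2 * q ^+ 2 - q); rewrite Dx r0; ring.
by exists (2 * q ^+ 2 + q); rewrite Dx r1; ring.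
Qed.

Lemma dvdz2_norm4 [d P Q : int] : P ^+ 2 - d * Q ^+ 2 = 4 -> (2 %| P - d * Q)%Z.
Proof.
move=> HP; have -> : P - d * Q = 2 * 2 - (P ^+ 2 - P) + d * (Q ^+ 2 - Q).
  by rewrite (_ : 2 * 2 = 4) // -HP; ring.
by rewrite rpredD 1?rpredB ?dvdz2_sqrB ?(dvdz_mull _ (dvdz2_sqrB _)).
Qed.

Section NormOneProduct.
Context {A B : int} {d : nat} {P Q X Y : int}.
Hypothesis norm_PQ : P ^+ 2 - d%:Z * Q ^+ 2 = 4.
Hypothesis twoX : 2 * X = A * P + B * d%:Z * Q.
Hypothesis twoY : 2 * Y = A * Q + B * P.

Lemma norm_XY : X ^+ 2 - d%:Z * Y ^+ 2 = A ^+ 2 - B ^+ 2 * d%:Z.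
Proof.
apply: (mulfI (_ : 4 != 0 :> int)) => //.
have -> : 4 * (X ^+ 2 - d%:Z * Y ^+ 2) = (2 * X) ^+ 2 - d%:Z * (2 * Y) ^+ 2 by ring.
by rewrite twoX twoY -[X in X * (_ - _)]norm_PQ; ring.
Qed.

Lemma gcd_sqr_dvd_sqrX : (gcdz (A ^+ 2) d %| X ^+ 2)%Z.
Proof.
set G := gcdz (A ^+ 2) d; have G_A2 : (G %| A ^+ 2)%Z := dvdz_gcdl _ _.
have G_d : (G %| d%:Z)%Z := dvdz_gcdr _ _.
have E4 : 4 * X ^+ 2 = A ^+ 2 * P ^+ 2 + d%:Z * (2 * A * B * P * Q + B ^+ 2 * (P ^+ 2 - 4)).
  have -> : P ^+ 2 - 4 = d%:Z * Q ^+ 2 by rewrite -norm_PQ; ring.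
  by rewrite (_ : 4 * X ^+ 2 = (2 * X) ^+ 2); [rewrite twoX; ring | ring].
(* E4 suffices for odd d; for even d, P is even and E4 can be divided by 4. *)
have [d_odd|d_even] := boolP (odd d).
  have cop_G4 : coprimez G 4.
    rewrite coprimezE (_ : `|4%:Z|%N = 2 ^ 2)%N // coprime_pexpr // coprimen2.
    by apply: dvdn_odd d_odd; move: G_d; rewrite dvdzE.
  by rewrite -(Gauss_dvdzr _ cop_G4) E4 rpredD ?(dvdz_mulr _ G_A2) ?(dvdz_mulr _ G_d).
have [P' DP] : exists P', P = 2 * P'.
  have d2 : (2 %| d%:Z)%Z by rewrite dvdzE /= dvdn2.
  have /dvdzP[R DR] : (2 %| P)%Z.
    by rewrite -(subrK (d%:Z * Q) P) rpredD ?dvdz2_norm4 ?dvdz_mulr.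
  by exists R; rewrite DR mulrC.
have -> : X ^+ 2 = A ^+ 2 * P' ^+ 2 + d%:Z * (A * B * P' * Q + B ^+ 2 * (P' ^+ 2 - 1)).
  by apply: (mulfI (_ : 4 != 0 :> int)) => //; rewrite E4 DP; ring.
by rewrite rpredD ?(dvdz_mulr _ G_A2) ?(dvdz_mulr _ G_d).
Qed.

Lemma gcd_sqrX_norm_dvd : coprimez A B ->
  (gcdz (X ^+ 2) (A ^+ 2 - B ^+ 2 * d%:Z) %| 4 ^+ 2 * gcdz (A ^+ 2) d)%Z.
Proof.
move=> cop_AB; set N := A ^+ 2 - B ^+ 2 * d%:Z; set D := gcdz (X ^+ 2) N.
have D_X2 : (D %| X ^+ 2)%Z := dvdz_gcdl _ _.
have D_N : (D %| N)%Z := dvdz_gcdr _ _.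
have D_dY2 : (D %| d%:Z * Y ^+ 2)%Z.
  have -> : d%:Z * Y ^+ 2 = X ^+ 2 - N by rewrite /N -norm_XY; ring.
  by rewrite rpredB.
have D_dXY : (D %| d%:Z * X * Y)%Z.
  rewrite -(dvdz_pexp2r _ _ (_ : 0 < 2)%N) //.
  rewrite (_ : (_ * _) ^+ 2 = X ^+ 2 * (d%:Z * (d%:Z * Y ^+ 2))); last by ring.
  by rewrite [D ^+ 2]expr2 dvdz_mul // dvdz_mull.
have twoA : 2 * A = X * P - d%:Z * Y * Q.
  apply: (mulfI (_ : 2 != 0 :> int)) => //.
  transitivity (A * (P ^+ 2 - d%:Z * Q ^+ 2)); first by rewrite norm_PQ; ring.
  have -> : 2 * (X * P - d%:Z * Y * Q) = 2 * X * P - d%:Z * (2 * Y) * Q by ring.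
  by rewrite twoX twoY; ring.
have D_4A2 : (D %| 4 * A ^+ 2)%Z.
  have -> : 4 * A ^+ 2 = P ^+ 2 * X ^+ 2 - 2 * P * Q * (d%:Z * X * Y)
      + Q ^+ 2 * (d%:Z * (d%:Z * Y ^+ 2)).
    by rewrite (_ : 4 * A ^+ 2 = (2 * A) ^+ 2); [rewrite twoA; ring | ring].
  by rewrite rpredD ?rpredB ?(dvdz_mull _ D_X2) ?(dvdz_mull _ D_dXY)
    ?(dvdz_mull _ (dvdz_mull _ D_dY2)).
apply: (@dvdz_sqr_gcd_coprime _ (B ^+ 2)) => //; first by rewrite coprimezXl ?coprimezXr.
have -> : 4 * B ^+ 2 * d%:Z = 4 * A ^+ 2 - 4 * N by rewrite /N; ring.
by rewrite rpredB // dvdz_mull.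
Qed.

Lemma gcd_sqrX_norm_pow2 : A != 0 -> coprimez A B ->
  exists2 i, (i <= 4)%N &
    gcdz (X ^+ 2) (A ^+ 2 - B ^+ 2 * d%:Z) = gcdz (A ^+ 2) d * 2 ^+ i.
Proof.
move=> A_neq0 cop_AB; apply: dvdz_sandwich_pow2.
- by rewrite ltz_nat gcdn_gt0 absz_gt0 expf_neq0.
- by [].
- rewrite dvdz_gcd gcd_sqr_dvd_sqrX rpredB ?dvdz_gcdl //.
  by rewrite dvdz_mull ?dvdz_gcdr.
- by rewrite (_ : 2 ^+ 4 = 4 ^+ 2) ?gcd_sqrX_norm_dvd.
Qed.
End NormOneProduct.

Lemma sqrtC_nat_notin_Crat (d : nat) :
  ~ (exists r : nat, d = (r ^ 2)%N) -> sqrtC (d%:R : algC) \notin Crat.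
Proof.
move=> d_nsq; apply/negP => sqrtd_rat; apply: d_nsq.
have sqrtd_Aint : sqrtC (d%:R : algC) \in Aint.
  apply: (@root_monic_Aint ('X^2 - (d%:R)%:P)).
  - by rewrite rootE !hornerE sqrtCK subrr.
  - exact: monicXnsubC.
  - by rewrite polyOverXnsubC rpred_nat.
have : sqrtC (d%:R : algC) \is a Num.nat.
  by rewrite natrEint Cint_rat_Aint // sqrtC_ge0 ler0n.
case/natrP => r Dr; exists r.
by apply/eqP; rewrite -(eqr_nat algC) natrX -Dr sqrtCK.
Qed.

Lemma size_minCpoly_notin_Crat (x : algC) : x \notin Crat -> (2 < size (minCpoly x))%N.
Proof.
move=> x_irr; rewrite ltn_neqAle size_minCpoly andbT; apply: contra x_irr => /eqP sz2.
have Dmin : minCpoly x = 'X - x%:P.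
  apply/eqP; rewrite eq_sym -eqp_monic ?monicXsubC ?minCpoly_monic //.
  rewrite -dvdp_size_eqp ?size_XsubC -?sz2 // dvdp_XsubCl; exact: root_minCpoly.
have [p [Dp _] _] := minCpolyP x.
have := congr1 (fun q : {poly algC} => q`_0) Dmin; rewrite Dp coef_map coefB coefX coefC /= sub0r.
by move=> Dx; rewrite -[x]opprK -Dx rpredN Crat_rat.
Qed.

Lemma minCpoly_size3 (x : algC) (p : {poly rat}) : x \notin Crat ->
  p \is monic -> size p = 3 -> root (map_poly ratr p) x -> minCpoly x = map_poly ratr p.
Proof.
move=> x_irr p_monic sz_p px0; have [p0 [Dp0 p0_monic] p0_min] := minCpolyP x.
have p0_p : (p0 %| p)%R by rewrite -p0_min.
have sz_p0 : size p0 = 3.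
  apply/eqP; rewrite eqn_leq -{1}sz_p dvdp_leq ?monic_neq0 //=.
  by rewrite -(size_map_poly (ratr : {rmorphism rat -> algC})) -Dp0 size_minCpoly_notin_Crat.
by rewrite Dp0; congr map_poly; apply/eqP; rewrite -eqp_monic // -dvdp_size_eqp // sz_p0 sz_p.
Qed.

Section QuadraticIntegers.
Context {d : nat}.
Hypothesis sqrtd_irr : sqrtC (d%:R : algC) \notin Crat.
Local Notation sqrtd := (sqrtC (d%:R : algC)).

Lemma sqrtd_coordI (x y x' y' : int) :
  x%:~R + y%:~R * sqrtd = x'%:~R + y'%:~R * sqrtd -> x = x' /\ y = y'.
Proof.
move=> E; have y_eq : y = y'.
  apply/eqP; apply: contraR sqrtd_irr => y_neq.
  have yy_neq0 : (y'%:~R - y%:~R : algC) != 0 by rewrite subr_eq0 eqr_int eq_sym.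
  have -> : sqrtd = (x%:~R - x'%:~R) / (y'%:~R - y%:~R).
    apply: (mulIf yy_neq0); rewrite divfK //.
    transitivity (x'%:~R + y'%:~R * sqrtd - (x%:~R + y%:~R * sqrtd) + (x%:~R - x'%:~R)).
      by ring.
    by rewrite -E subrr add0r.
  by rewrite rpred_div ?rpredB ?rpred_int.
by move: E; rewrite y_eq => /addIr/intr_inj.
Qed.

Lemma Aint_sqrtd_norm (r s : algC) : r \in Crat -> s \in Crat ->
  r + s * sqrtd \in Aint -> r ^+ 2 - d%:R * s ^+ 2 \in Num.int.
Proof.
case/CratP=> a ->; case/CratP=> b ->; set x := _ + _ => x_Aint.
have [b0|b_neq0] := eqVneq b 0.
  move: x_Aint; rewrite /x b0 rmorph0 mul0r addr0 expr0n mulr0 subr0 => a_Aint.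
  by rewrite rpredX // Cint_rat_Aint ?Crat_rat.
have x_irr : x \notin Crat.
  apply: contra sqrtd_irr => x_rat; have b_neq0' : ratr b != 0 :> algC by rewrite fmorph_eq0.
  have -> : sqrtd = (x - ratr a) / ratr b by rewrite /x (addrC (ratr a)) addrK mulrC mulKf.
  by rewrite rpred_div ?rpredB ?Crat_rat.
(* q is the minimal polynomial of x, integral exactly when x is an algebraic integer. *)
set q : {poly rat} := ('X - a%:P) ^+ 2 - (d%:R * b ^+ 2)%:P.
have sz_q : size q = 3.
  by rewrite size_addl ?size_exp_XsubC // size_opp (leq_ltn_trans (size_polyC_leq1 _)).
have q_monic : q \is monic.
  rewrite monicE lead_coefDl ?size_exp_XsubC ?size_opp ?(leq_ltn_trans (size_polyC_leq1 _)) //.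
  by rewrite -monicE rpredX ?monicXsubC.
have qx0 : root (map_poly ratr q) x.
  rewrite rootE rmorphB rmorphXn /= map_polyXsubC map_polyC /= (rmorphM ratr) (rmorphXn ratr).
  rewrite rmorph_nat.
  rewrite hornerD hornerN horner_exp hornerXsubC hornerC /x (addrC (ratr a)) addrK.
  by rewrite exprMn sqrtCK mulrC subrr.
move: x_Aint; rewrite unfold_in (@minCpoly_size3 x q x_irr q_monic sz_q qx0).
move=> /polyOverP/(_ 0%N); rewrite coef_map -horner_coef0 /q.
rewrite hornerD hornerN horner_exp hornerXsubC hornerC sub0r sqrrN.
suff -> : ratr a ^+ 2 - d%:R * ratr b ^+ 2 = ratr (a ^+ 2 - d%:R * b ^+ 2) :> algC by [].
by rewrite rmorphB rmorphXn rmorphM rmorphXn rmorph_nat.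
Qed.

Lemma Aint_sqrtd_half_norm (t u : int) : (t%:~R + u%:~R * sqrtd) / 2 \in Aint ->
  exists n : int, n%:~R = (t%:~R ^+ 2 - d%:R * u%:~R ^+ 2) / 4 :> algC.
Proof.
move=> e_Aint.
suff /intrP[n ->] : (t%:~R ^+ 2 - d%:R * u%:~R ^+ 2) / 4 \is a @Num.int algC by exists n.
have -> : (t%:~R ^+ 2 - d%:R * u%:~R ^+ 2) / 4
    = (t%:~R / 2) ^+ 2 - d%:R * (u%:~R / 2) ^+ 2 :> algC by field.
apply: Aint_sqrtd_norm; rewrite ?rpred_div ?rpred_int ?rpred_nat //.
by rewrite -mulrA (mulrC (2^-1)) mulrA -mulrDl.
Qed.

Lemma Aint_unit_sqrtd_norm (t u : int) : u != 0 ->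
  (t%:~R + u%:~R * sqrtd) / 2 \in Aint -> ((t%:~R + u%:~R * sqrtd) / 2)^-1 \in Aint ->
  exists2 n : int, n ^+ 2 = 1 & t ^+ 2 - d%:Z * u ^+ 2 = 4 * n.
Proof.
move=> u_neq0 e_Aint eV_Aint; have [n Dn] := Aint_sqrtd_half_norm _ _ e_Aint.
have Dnorm : t ^+ 2 - d%:Z * u ^+ 2 = 4 * n.
  apply: (@intr_inj algC); rewrite !(rmorphB, rmorphM, rmorphXn) /= Dn.
  by rewrite -!pmulrn; field.
have n_neq0 : n%:~R != 0 :> algC.
  rewrite Dn mulf_eq0 invr_eq0 pnatr_eq0 orbF subr_eq0; move: sqrtd_irr; apply: contra.
  move=> /eqP t2; have u_neq0' : u%:~R != 0 :> algC by rewrite intr_eq0.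
  have : sqrtd ^+ 2 == (t%:~R / u%:~R) ^+ 2 by rewrite sqrtCK expr_div_n t2 mulfK ?expf_neq0.
  by rewrite eqf_sqr => /orP[]/eqP->; rewrite ?rpredN rpred_div ?rpred_int.
pose r := t%:~R / (2 * n%:~R) : algC; pose s := - u%:~R / (2 * n%:~R) : algC.
have DeV : ((t%:~R + u%:~R * sqrtd) / 2)^-1 = r + s * sqrtd.
  apply: mulr1_eq; move: (sqrtCK (d%:R : algC)) Dn; set w := sqrtd => w2 Dn'.
  transitivity ((t%:~R ^+ 2 - d%:R * u%:~R ^+ 2) / 4 / n%:~R : algC); last by rewrite -Dn' divff.
  by rewrite /r /s -w2; field.
have : r ^+ 2 - d%:R * s ^+ 2 \is a @Num.int algC.
  by apply: Aint_sqrtd_norm; rewrite -?DeV // ?rpred_div ?rpredN ?rpredM ?rpred_int ?rpred_nat.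
have -> : r ^+ 2 - d%:R * s ^+ 2 = (n%:~R)^-1.
  transitivity ((t%:~R ^+ 2 - d%:R * u%:~R ^+ 2) / 4 / n%:~R ^+ 2 : algC).
    by rewrite /r /s; field.
  by rewrite -Dn expr2 invfM mulVKf.
case/intrP=> m Dm; have n_unit : n \is a GRing.unit.
  by apply/unitrPr; exists m; apply: (@intr_inj algC); rewrite rmorphM /= -Dm mulfV.
by exists n => //; apply/eqP; rewrite sqrf_eq1; exact: n_unit.
Qed.

Lemma sqrtd_mul_half_coord (A B P Q X Y : int) :
  X%:~R + Y%:~R * sqrtd = (A%:~R + B%:~R * sqrtd) * ((P%:~R + Q%:~R * sqrtd) / 2) ->
  2 * X = A * P + B * d%:Z * Q /\ 2 * Y = A * Q + B * P.
Proof.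
move=> E; apply: sqrtd_coordI; move: (sqrtCK (d%:R : algC)) E; set w := sqrtd => w2 E.
rewrite !intrD !intrM -!pmulrn.
transitivity (2 * (X%:~R + Y%:~R * w)); first by ring.
by rewrite E -w2; field.
Qed.
End QuadraticIntegers.

Definition half_norm1 (d : nat) (z : algC) : Prop := exists P Q : int,
  P ^+ 2 - d%:Z * Q ^+ 2 = 4 /\ z = (P%:~R + Q%:~R * sqrtC d%:R) / 2.

Section HalfNormOne.
Context {d : nat}.
Local Notation sqrtd := (sqrtC (d%:R : algC)).

Lemma half_norm1_1 : half_norm1 d 1.
Proof. by exists 2, 0; split; [ring | rewrite mul0r addr0 divff ?pnatr_eq0]. Qed.

Lemma half_norm1M z1 z2 : half_norm1 d z1 -> half_norm1 d z2 -> half_norm1 d (z1 * z2).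
Proof.
move=> [P1 [Q1 [N1 ->]]] [P2 [Q2 [N2 ->]]].
(* P_i = d Q_i (mod 2) makes both coordinates of the product integral. *)
have E1 n := dvdz_mulr n (dvdz2_norm4 N1); have E2 n := dvdz_mulr n (dvdz2_norm4 N2).
have E2d n := dvdz_mulr n (dvdzz 2).
have /dvdzP[P EP] : (2 %| P1 * P2 + d%:Z * Q1 * Q2)%Z.
  have -> : P1 * P2 + d%:Z * Q1 * Q2 = (P1 - d%:Z * Q1) * P2 + (P2 - d%:Z * Q2) * (d%:Z * Q1)
      + (d%:Z ^+ 2 - d%:Z) * (Q1 * Q2) + 2 * (d%:Z * Q1 * Q2) by ring.
  by rewrite !rpredD ?E1 ?E2 ?E2d ?(dvdz_mulr _ (dvdz2_sqrB _)).
have /dvdzP[Q EQ] : (2 %| P1 * Q2 + Q1 * P2)%Z.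
  have -> : P1 * Q2 + Q1 * P2
      = (P1 - d%:Z * Q1) * Q2 + (P2 - d%:Z * Q2) * Q1 + 2 * (d%:Z * Q1 * Q2) by ring.
  by rewrite !rpredD ?E1 ?E2 ?E2d.
exists P, Q; split.
  apply: (mulfI (_ : 4 != 0 :> int)) => //.
  transitivity ((P1 ^+ 2 - d%:Z * Q1 ^+ 2) * (P2 ^+ 2 - d%:Z * Q2 ^+ 2)); last by rewrite N1 N2.
  have -> : 4 * (P ^+ 2 - d%:Z * Q ^+ 2) = (P * 2) ^+ 2 - d%:Z * (Q * 2) ^+ 2 by ring.
  by rewrite -EP -EQ; ring.
have EP' : P1%:~R * P2%:~R + d%:R * Q1%:~R * Q2%:~R = P%:~R * 2 :> algC.
  by rewrite -[d%:R]/((d%:Z)%:~R) -!intrM -intrD EP intrM.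
have EQ' : P1%:~R * Q2%:~R + Q1%:~R * P2%:~R = Q%:~R * 2 :> algC.
  by rewrite -!intrM -intrD EQ intrM.
move: (sqrtCK (d%:R : algC)); set w := sqrtd => w2.
apply: (mulfI (_ : 4 != 0 :> algC)); first by rewrite pnatr_eq0.
transitivity (P1%:~R * P2%:~R + d%:R * Q1%:~R * Q2%:~R
    + (P1%:~R * Q2%:~R + Q1%:~R * P2%:~R) * w : algC); first by rewrite -w2; field.
by rewrite EP' EQ'; field.
Qed.

Lemma half_norm1V z : half_norm1 d z -> half_norm1 d z^-1.
Proof.
move=> [P [Q [N ->]]]; exists P, (- Q); split; first by rewrite sqrrN.
have N' : P%:~R ^+ 2 - d%:R * Q%:~R ^+ 2 = 4 :> algC.
  by rewrite -[d%:R]/((d%:Z)%:~R) -!rmorphXn -intrM -intrB N.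
apply: mulr1_eq; move: (sqrtCK (d%:R : algC)) N'; set w := sqrtd => w2 N'.
transitivity ((P%:~R ^+ 2 - d%:R * Q%:~R ^+ 2) / 4 : algC); last by rewrite N' divff ?pnatr_eq0.
by rewrite -w2 rmorphN; field.
Qed.

Lemma half_norm1Xz z (k : int) : half_norm1 d z -> half_norm1 d (z ^ k).
Proof.
move=> hz; have hzn (n : nat) : half_norm1 d (z ^+ n).
  by elim: n => [|n IHn]; [rewrite expr0; apply: half_norm1_1 | rewrite exprS; apply: half_norm1M].
by case: k => n; [exact: hzn | exact/half_norm1V/hzn].
Qed.

Lemma half_norm1_sqr (t u n : int) : n ^+ 2 = 1 ->
  t ^+ 2 - d%:Z * u ^+ 2 = 4 * n -> half_norm1 d (((t%:~R + u%:~R * sqrtd) / 2) ^+ 2).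
Proof.
move=> n2 Dt; exists (t ^+ 2 - 2 * n), (t * u); split.
  transitivity (t ^+ 2 * (t ^+ 2 - d%:Z * u ^+ 2) - 4 * n * t ^+ 2 + 4 * n ^+ 2); first by ring.
  by rewrite Dt n2; ring.
have Dn : n%:~R = (t%:~R ^+ 2 - d%:R * u%:~R ^+ 2) / 4 :> algC.
  rewrite -[d%:R]/((d%:Z)%:~R) -!rmorphXn -intrM -intrB Dt intrM -pmulrn.
  by field.
move: (sqrtCK (d%:R : algC)) Dn; set w := sqrtd => w2 Dn.
transitivity ((t%:~R ^+ 2 + u%:~R ^+ 2 * w ^+ 2 + 2 * t%:~R * u%:~R * w) / 4 : algC).
  by field.
by rewrite intrB !intrM -pmulrn w2 Dn; field.
Qed.
End HalfNormOne.

Lemma sqrtd_unit_power_coords (d : nat) (t u k A B X Y : int) :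
  sqrtC (d%:R : algC) \notin Crat -> u != 0 ->
  ((t%:~R + u%:~R * sqrtC d%:R) / 2 : algC) \in Aint ->
  ((t%:~R + u%:~R * sqrtC d%:R) / 2 : algC)^-1 \in Aint ->
  X%:~R + Y%:~R * sqrtC d%:R =
    (A%:~R + B%:~R * sqrtC d%:R) * ((t%:~R + u%:~R * sqrtC d%:R) / 2) ^ (2 * k) :> algC ->
  exists P Q : int, [/\ P ^+ 2 - d%:Z * Q ^+ 2 = 4,
    2 * X = A * P + B * d%:Z * Q & 2 * Y = A * Q + B * P].
Proof.
move=> sqrtd_irr u_neq0 eps_Aint epsV_Aint DXY.
have [n n2 Dtu] := Aint_unit_sqrtd_norm sqrtd_irr t u u_neq0 eps_Aint epsV_Aint.
have [P [Q [norm_PQ DPQ]]] := half_norm1Xz _ k (half_norm1_sqr _ _ _ n2 Dtu).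
rewrite -exprz_exp DPQ in DXY.
by exists P, Q; have [] := sqrtd_mul_half_coord sqrtd_irr A B P Q X Y DXY.
Qed.

Lemma g1_of_double (X s u2 : int) : u2 = 2 * s \/ u2 = - (2 * s) ->
  g1_of (2 * X) u2 = 2 * gcdz X s.
Proof. by rewrite /g1_of; case=> ->; rewrite ?gcdzN -mulz_gcdr. Qed.

Lemma g3_of_pow2 (t' u1 u2 : int) : exists2 j, (j <= 2)%N & g3_of t' u1 u2 = 2 ^+ j.
Proof.
rewrite /g3_of; case: ifP => _; last by exists 2%N.
by case: ifP => _; [exists 0%N | case: ifP => _; [exists 1%N | exists 2%N]].
Qed.

Lemma g_of_sqr (t' u1 u2 : int) :
  g_of t' u1 u2 ^+ 2 = (g1_of u1 u2 ^+ 2 * g2_of t' u1 u2)%:~R / (g3_of t' u1 u2)%:~R.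
Proof. by rewrite /g_of exprMn sqrtCK intrM rmorphXn mulrA. Qed.

Lemma g_of_sqr_pow2 (t' s u2 X : int) (G i : nat) : sqfree_int t' -> (0 < G)%N ->
  u2 = 2 * s \/ u2 = - (2 * s) -> gcdz (X ^+ 2) (t' * s ^+ 2) = G%:Z * 2 ^+ i ->
  exists m : nat, g_of t' (2 * X) u2 ^+ 2 / G%:R = 2%:R ^+ m.
Proof.
move=> t'_sqf G_gt0 Du2; rewrite gcdz_sqr_mul_sqr // => Di.
have [j j_le2 g3j] := g3_of_pow2 t' (2 * X) u2.
exists (i.+2 - j)%N; rewrite g_of_sqr /g2_of (g1_of_double X s u2 Du2) g3j divzMpl //.
have -> : (2 * gcdz X s) ^+ 2 * gcdz (X %/ gcdz X s)%Z t' = 4 * 2 ^+ i * G%:Z.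
  transitivity (4 * (gcdz X s ^+ 2 * gcdz (X %/ gcdz X s)%Z t')); first by ring.
  by rewrite Di; ring.
rewrite expfB_cond ?pnatr_eq0 ?(leq_trans j_le2) // !exprS !(intrM, rmorphXn) /= -!pmulrn.
by field; rewrite pnatr_eq0 -lt0n G_gt0 expf_neq0 ?pnatr_eq0.
Qed.

Theorem lemma3p11 (a b d t u : nat) (k : int) (t' s u2 X Y : int) :
  (0 < a)%N -> (0 < b)%N -> (0 < d)%N ->
  ~ (exists r : nat, d = (r ^ 2)%N) ->
  (0 < t)%N -> (0 < u)%N ->
  (* eps = (t + u sqrt d)/2 is a unit of the ring of integers of Q(sqrt d) *)
  ((t%:R + u%:R * sqrtC d%:R) / 2 : algC) \in Aint ->
  ((t%:R + u%:R * sqrtC d%:R) / 2 : algC)^-1 \in Aint ->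
  k != 0 ->
  coprime a b ->
  ((a ^ 2)%:Z - (b ^ 4 * d)%:Z < 0) ->
  (* x_k = X, y_k = Y are integers: X + Y sqrt d = alpha * eps^(2k) *)
  (X%:~R + Y%:~R * sqrtC d%:R : algC) =
    (a%:R + (b ^ 2)%:R * sqrtC d%:R) * ((t%:R + u%:R * sqrtC d%:R) / 2) ^ (2 * k) ->
  is_core ((a ^ 2)%:Z - (b ^ 4 * d)%:Z) t' ->
  (* s = sqrt(N_alpha / core(N_alpha)) *)
  0 <= s -> (a ^ 2)%:Z - (b ^ 4 * d)%:Z = t' * s ^+ 2 ->
  (u2 = 2 * s \/ u2 = - (2 * s)) ->
  exists m : nat,
    (g_of t' (2 * X) u2) ^+ 2 / (gcdn (a ^ 2) (d * b ^ 4))%:R = 2%:R ^+ m.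
Proof.
move=> a_gt0 _ _ d_nsq _ u_gt0 eps_Aint epsV_Aint _ cop_ab _ DXY [t'_sqf _] _ DN Du2.
have u_neq0 : u%:Z != 0 by rewrite eqz_nat -lt0n.
have [P [Q [norm_PQ twoX twoY]]] := sqrtd_unit_power_coords d t u k a (b ^ 2)%N X Y
  (sqrtC_nat_notin_Crat d d_nsq) u_neq0 eps_Aint epsV_Aint DXY.
have a_neq0 : a%:Z != 0 by rewrite eqz_nat -lt0n.
have cop_ab2 : coprimez a (b ^ 2)%N by rewrite coprimezE !absz_nat coprime_pexpr.
have [i _ Di] := gcd_sqrX_norm_pow2 norm_PQ twoX twoY a_neq0 cop_ab2.
have N_eq : a%:Z ^+ 2 - (b ^ 2)%:Z ^+ 2 * d%:Z = t' * s ^+ 2 by rewrite -DN; lia.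
have EG : gcdz (a%:Z ^+ 2) d = (gcdn (a ^ 2) (d * b ^ 4))%:Z.
  by rewrite /gcdz abszX !absz_nat Gauss_gcdl // coprime_pexpl // coprime_pexpr.
rewrite N_eq EG in Di; apply: g_of_sqr_pow2 t'_sqf _ Du2 Di.
by rewrite gcdn_gt0 expn_gt0 a_gt0.
Qed.
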